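(* For any $n\in\mathbb{N}$, the monoid $\mathrm{lps}_n$ is finitely presented.
   Context: Let $\mathcal{A}_n=\{1<2<\cdots<n\}$. An lPS tableau is a finite (possibly empty) sequence of nonempty bottom-justified columns of boxes filled with positive integers, such that the entries of each column are strictly decreasing from top to bottom and the bottom entries of the columns form a weakly increasing sequence from left to right. Right insertion of a symbol $a$ into an lPS tableau $B$: if $a$ is greater than or equal to every entry of the bottom row, append a new column consisting of $a$ at the right end; otherwise, let $z$ be the leftmost bottom-row entry with $z>a$ and put $a$ in a new box at the bottom of the column of $z$ (the previous entries of that column move up one box). For $w=w_1\cdots w_k$, $\mathfrak{R}_\ell(w)$ is obtained by starting with the empty tableau and right-inserting $w_1,\dots,w_k$ in order. The monoid $\mathrm{lps}_n$ is the quotient of the free monoid $\mathcal{A}_n^*$ by the congruence $u\equiv v\iff\mathfrak{R}_\ell(u)=\mathfrak{R}_\ell(v)$. *)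

From mathcomp Require Import all_boot.
Set Implicit Arguments. Unset Strict Implicit. Unset Printing Implicit Defensive.

Definition word (n : nat) (w : seq nat) : bool := all (fun a => (0 < a <= n)%N) w.

(* An lPS tableau is a sequence of columns (left to right); each column is
   stored as the list of its entries from BOTTOM to TOP (so the head of a
   column is its bottom entry). *)
Definition is_lPS (T : seq (seq nat)) : bool :=
  all (fun c => (c != [::]) && sorted (fun x y => (x < y)%N) c) T
  && sorted leq (map (head 0%N) T).

Fixpoint rins (T : seq (seq nat)) (a : nat) : seq (seq nat) :=
  match T with
  | [::] => [:: [:: a]]
  | c :: T' => if (a < head 0%N c)%N then (a :: c) :: T' else c :: rins T' a
  end.

Definition Rl (w : seq nat) : seq (seq nat) := foldl rins [::] w.

Definition lps_equiv (u v : seq nat) : Prop := Rl u = Rl v.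

Inductive cong_gen (X : eqType) (R : seq (seq X * seq X)) : seq X -> seq X -> Prop :=
  | cg_rel : forall p q l r, (l, r) \in R -> cong_gen R (p ++ l ++ q) (p ++ r ++ q)
  | cg_refl : forall u, cong_gen R u u
  | cg_sym : forall u v, cong_gen R u v -> cong_gen R v u
  | cg_trans : forall u v w, cong_gen R u v -> cong_gen R v w -> cong_gen R u w.

(* The homomorphism X^* -> A_n^* (composed with the projection onto lps_n)
   determined by images g i of the generators. *)
Definition hom_ext (k : nat) (g : 'I_k -> seq nat) (x : seq 'I_k) : seq nat :=
  flatten (map g x).

(* The isomorphism is induced by a monoid homomorphism X^* -> lps_n
   (given by words g i over A_n representing the images of generators), which
   is surjective and whose kernel congruence is exactly R^#. *)
Definition lps_finitely_presented (n : nat) : Prop :=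
  exists (k : nat) (R : seq (seq 'I_k * seq 'I_k)) (g : 'I_k -> seq nat),
    [/\ (forall i, word n (g i)),
        (forall w, word n w -> exists x, lps_equiv (hom_ext g x) w) &
        (forall x y, lps_equiv (hom_ext g x) (hom_ext g y) <-> cong_gen R x y)].

From mathcomp Require Import all_boot.
Set Implicit Arguments. Unset Strict Implicit. Unset Printing Implicit Defensive.

(* Generators are the letters 1..n; relations are x w a = x a w for letters
   a < x and every column word w (strictly decreasing, so there are finitely
   many) with all entries at least x.  They hold in lps_n because a is placed
   below the column receiving x, which the letters of w pass either way.
   Conversely, appending a letter a to the column reading of a tableau and
   moving a leftwards across the columns, one relation per column, yields the
   reading of the tableau after inserting a.  So every word is congruent to the
   reading of its tableau, and words with equal tableaux are congruent. *)

Lemma rins_cat_heads_le (V V' : seq (seq nat)) a :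
  all (fun c => head 0 c <= a) V -> rins (V ++ V') a = V ++ rins V' a.
Proof. by elim: V => //= c V IH /andP[ca /IH ->]; rewrite ltnNge ca. Qed.

Lemma foldl_rins_cat_heads_le (V V' : seq (seq nat)) w :
  {in w, forall a, all (fun c => head 0 c <= a) V} ->
  foldl rins (V ++ V') w = V ++ foldl rins V' w.
Proof.
elim: w V' => //= a w IH V' Vw.
rewrite rins_cat_heads_le ?Vw ?mem_head // IH // => b wb.
by rewrite Vw // in_cons wb orbT.
Qed.

Lemma rins_decomp (T : seq (seq nat)) x a : a < x ->
  exists V1 Y V2, [/\ rins T x = V1 ++ Y :: V2,
    all (fun c => head 0 c <= a) V1 & a < head 0 Y <= x].
Proof.
move=> ax; elim: T => [|c T IH] /=; first by exists [::], [:: x], [::]; rewrite /= ax leqnn.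
have [xc|cx] := ltnP x (head 0 c); first by exists [::], (x :: c), T; rewrite /= ax leqnn.
have [V1 [Y [V2 [-> V1a aYx]]]] := IH.
have [ca|ac] := leqP (head 0 c) a; first by exists (c :: V1), Y, V2; rewrite /= ca V1a.
by exists [::], c, (V1 ++ Y :: V2); rewrite /= ac cx.
Qed.

Lemma foldl_rins_swap (T : seq (seq nat)) x a w : a < x -> all (leq x) w ->
  foldl rins T (x :: w ++ [:: a]) = foldl rins T (x :: a :: w).
Proof.
move=> ax /allP xw /=; have [V1 [Y [V2 [-> V1a /andP[aY Yx]]]]] := rins_decomp T ax.
have insert_a V : rins (V1 ++ Y :: V) a = V1 ++ (a :: Y) :: V.
  by rewrite rins_cat_heads_le //= aY.
have pass_w Z : head 0 Z <= x -> foldl rins (V1 ++ Z :: V2) w = rcons V1 Z ++ foldl rins V2 w.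
  move=> Zx; rewrite -cat1s catA foldl_rins_cat_heads_le ?cats1 // => b /xw xb.
  rewrite all_rcons (leq_trans Zx xb).
  by apply: sub_all V1a => c /leq_trans; apply; rewrite (leq_trans (ltnW ax)).
rewrite foldl_cat insert_a pass_w // pass_w ?(ltnW ax) //.
by rewrite -cats1 -catA /= insert_a -cats1 -catA.
Qed.

Lemma path_heads_rins (T : seq (seq nat)) a b : b <= a ->
  path leq b (map (head 0) T) -> path leq b (map (head 0) (rins T a)).
Proof.
elim: T b => [|c T IH] b ba /=; first by rewrite ba.
case/andP=> bc cT; case: ifPn => [ac|]; last by rewrite -leqNgt /= bc => /IH ->.
by rewrite /= ba (path_le leq_trans (ltnW ac)).
Qed.

Lemma rins_is_lPS (T : seq (seq nat)) a : is_lPS T -> is_lPS (rins T a).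
Proof.
have sorted_path0 s : sorted leq s = path leq 0 s by case: s.
rewrite /is_lPS !sorted_path0 => /andP[cols heads].
apply/andP; split; last exact: path_heads_rins.
elim: T cols {heads} => //= c T IH /andP[ccol Tcols].
case: ifP => [ac|_] /=; last by rewrite ccol IH.
by case: c ccol ac => //= h t -> ->.
Qed.

Lemma Rl_is_lPS w : is_lPS (Rl w).
Proof.
rewrite /Rl; have : is_lPS [::] by [].
by elim: w [::] => //= a w IH T /(rins_is_lPS a) /IH.
Qed.

Lemma is_lPS_behead (c : seq nat) T : is_lPS (c :: T) -> is_lPS T.
Proof. by rewrite /is_lPS /= => /andP[/andP[_ ->] /path_sorted]. Qed.

Lemma is_lPS_bottom_column h (t : seq nat) T : is_lPS ((h :: t) :: T) -> is_lPS ([:: h] :: T).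
Proof. by rewrite /is_lPS /= => /andP[/andP[_ ->] ->]. Qed.

Definition symb n (i : 'I_n) : nat := i.+1.

Lemma symb_inj n : injective (@symb n).
Proof. by move=> i j [/val_inj]. Qed.

Lemma sorted_map_symb n (c : seq 'I_n) :
  sorted ltn (map (@symb n) c) = sorted (fun i j : 'I_n => i < j) c.
Proof. by rewrite sorted_map. Qed.

Lemma hom_ext_symb n (x : seq 'I_n) : hom_ext (fun i => [:: symb i]) x = map (@symb n) x.
Proof. exact: flatten_map1. Qed.

Lemma word_map_symb n w : word n w -> exists x : seq 'I_n, w = map (@symb n) x.
Proof.
elim: w => [|b w IH] /=; first by exists [::].
case/andP=> /andP[b_gt0 b_le_n] /IH[x ->].
have b_lt_n : b.-1 < n by rewrite prednK.
by exists (Ordinal b_lt_n :: x); rewrite /= /symb prednK.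
Qed.

Fixpoint rins_ord n (T : seq (seq 'I_n)) (a : 'I_n) : seq (seq 'I_n) :=
  match T with
  | [::] => [:: [:: a]]
  | c :: T' => if a < head a c then (a :: c) :: T' else c :: rins_ord T' a
  end.

Definition Rl_ord n (x : seq 'I_n) : seq (seq 'I_n) := foldl (@rins_ord n) [::] x.

Lemma map_rins_ord n (T : seq (seq 'I_n)) a :
  map (map (@symb n)) (rins_ord T a) = rins (map (map (@symb n)) T) (symb a).
Proof.
elim: T => //= c T IH; case: c => [|h t] /=; first by rewrite ltnn /= IH.
by rewrite ltnS; case: ifP => //= _; rewrite IH.
Qed.

Lemma map_Rl_ord n (x : seq 'I_n) : map (map (@symb n)) (Rl_ord x) = Rl (map (@symb n) x).
Proof.
rewrite /Rl_ord /Rl -[[::] in RHS]/(map (map (@symb n)) [::]).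
by elim: x [::] => //= a x IH T; rewrite -map_rins_ord IH.
Qed.

Definition column_word n (A : {set 'I_n}) : seq 'I_n := rev (enum A).

Definition lps_rel n (t : 'I_n * 'I_n * {set 'I_n}) : seq 'I_n * seq 'I_n :=
  let: (x, a, A) := t in (x :: column_word A ++ [:: a], x :: a :: column_word A).

Definition lps_rel_ok n (t : 'I_n * 'I_n * {set 'I_n}) : bool :=
  let: (x, a, A) := t in (a < x) && [forall y in A, x <= y].

Definition lps_rels n : seq (seq 'I_n * seq 'I_n) := [seq lps_rel t | t in @lps_rel_ok n].

Lemma lps_rel_mem n (x a : 'I_n) (A : {set 'I_n}) : a < x -> {in A, forall y : 'I_n, x <= y} ->
  lps_rel (x, a, A) \in lps_rels n.
Proof. by move=> ax xA; apply: image_f; rewrite unfold_in /= ax; apply/forall_inP. Qed.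

Lemma lps_rels_sound n l r : (l, r) \in lps_rels n ->
  forall T, foldl rins T (map (@symb n) l) = foldl rins T (map (@symb n) r).
Proof.
case/imageP=> [[[x a] A]] /andP[ax /forall_inP xA] [-> ->] T /=.
rewrite map_cat; apply: foldl_rins_swap; first by rewrite ltnS.
by rewrite all_map all_rev; apply/allP => y; rewrite mem_enum /= ltnS => /xA.
Qed.

Lemma cong_gen_cat (X : eqType) (R : seq (seq X * seq X)) p q u v :
  cong_gen R u v -> cong_gen R (p ++ u ++ q) (p ++ v ++ q).
Proof.
elim=> [p' q' l r lr|w|u' v' _ uv|u' v' w' _ uv _ vw].
- have shift m : p ++ (p' ++ m ++ q') ++ q = (p ++ p') ++ m ++ q' ++ q by rewrite !catA.
  by rewrite !shift; apply: cg_rel.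
- exact: cg_refl.
- exact: cg_sym.
- exact: cg_trans uv vw.
Qed.

Lemma cong_gen_Rl n (x y : seq 'I_n) :
  cong_gen (lps_rels n) x y -> Rl (map (@symb n) x) = Rl (map (@symb n) y).
Proof.
elim=> // [p q l r /lps_rels_sound lr|u v w _ -> _ ->] //.
by rewrite /Rl !map_cat !foldl_cat lr.
Qed.

Lemma ltn_ord_trans n : transitive (fun i j : 'I_n => i < j).
Proof. by move=> ? ? ?; apply: ltn_trans. Qed.

Lemma enum_set_sorted n (c : seq 'I_n) :
  sorted (fun i j : 'I_n => i < j) c -> enum [set i in c] = c.
Proof.
have enum_sorted : sorted (fun i j : 'I_n => i < j) (enum 'I_n).
  by have := iota_ltn_sorted 0 n; rewrite -val_enum_ord sorted_map.
move=> c_sorted; apply: (irr_sorted_eq (@ltn_ord_trans n)) => //.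
- by move=> i; apply: ltnn.
- by rewrite enumT in enum_sorted; apply: (sorted_filter (@ltn_ord_trans n)).
- by move=> i; rewrite mem_enum inE.
Qed.

Lemma column_rel_mem n (x a h : 'I_n) t : a < x -> x <= h ->
  sorted (fun i j : 'I_n => i < j) (h :: t) ->
  (x :: rev (h :: t) ++ [:: a], x :: a :: rev (h :: t)) \in lps_rels n.
Proof.
move=> ax xh ht; have := @lps_rel_mem n x a [set i in h :: t] ax.
rewrite /= /column_word enum_set_sorted //; apply=> i; rewrite inE in_cons.
case/predU1P=> [-> //|/(allP (order_path_min (@ltn_ord_trans n) ht)) hi].
exact: leq_trans xh (ltnW hi).
Qed.

Definition reading (X : Type) (T : seq (seq X)) : seq X := flatten (map rev T).

Lemma cong_slide n (x a : 'I_n) (T : seq (seq 'I_n)) : a < x ->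
  is_lPS (map (map (@symb n)) ([:: x] :: T)) ->
  cong_gen (lps_rels n) (x :: reading T ++ [:: a]) (x :: a :: reading T).
Proof.
elim: T x => [|[|h t] T IH] x ax lPS; first exact: cg_refl.
  by rewrite /is_lPS /= in lPS.
move: (lPS); rewrite /is_lPS /= ltnS => /and3P[/andP[ht _] xh _].
have {}ht : sorted (fun i j : 'I_n => i < j) (h :: t) by rewrite -sorted_map_symb.
have /is_lPS_behead/is_lPS_bottom_column lPS_h := lPS.
have slide_h := cong_gen_cat (x :: rev t) [::] (IH h (leq_trans ax xh) lPS_h).
have swap_col := cg_rel [::] (reading T) (column_rel_mem (n := n) ax xh ht).
rewrite /reading /= -/(reading T) !rev_cons in swap_col *.
rewrite !cats0 in slide_h; rewrite -!cats1 -!catA /= in slide_h swap_col *.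
exact: cg_trans slide_h swap_col.
Qed.

Lemma cong_reading_rins_ord n (T : seq (seq 'I_n)) a :
  is_lPS (map (map (@symb n)) T) ->
  cong_gen (lps_rels n) (reading T ++ [:: a]) (reading (rins_ord T a)).
Proof.
elim: T => [|c T IH] lPS /=; first exact: cg_refl.
case: ifP => [ac|_]; last first.
  have := cong_gen_cat (rev c) [::] (IH (is_lPS_behead lPS)).
  by rewrite !cats0 /reading /= catA.
case: c lPS ac => [|h t] lPS /=; first by rewrite ltnn.
move=> ah; have /is_lPS_bottom_column lPS_h := lPS.
have := cong_gen_cat (rev t) [::] (cong_slide ah lPS_h).
by rewrite !cats0 /reading /= !rev_cons -!cats1 -!catA.
Qed.

Lemma cong_reading_Rl_ord n (x : seq 'I_n) : cong_gen (lps_rels n) x (reading (Rl_ord x)).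
Proof.
elim/last_ind: x => [|x a IH]; first exact: cg_refl.
rewrite /Rl_ord foldl_rcons -/(Rl_ord x).
apply: cg_trans (cong_reading_rins_ord a _); last by rewrite map_Rl_ord Rl_is_lPS.
by have := cong_gen_cat [::] [:: a] IH; rewrite /= cats1.
Qed.

Theorem proposition3p24 (n : nat) : lps_finitely_presented n.
Proof.
exists n, (lps_rels n), (fun i => [:: symb i]); split.
- by move=> i; rewrite /word /= ltn_ord.
- by move=> w /word_map_symb[x ->]; exists x; rewrite /lps_equiv hom_ext_symb.
move=> x y; rewrite /lps_equiv !hom_ext_symb; split; last exact: cong_gen_Rl.
rewrite -!map_Rl_ord => /(inj_map (inj_map (@symb_inj n))) Rl_xy.
by apply: cg_trans (cong_reading_Rl_ord x) _; rewrite Rl_xy; apply/cg_sym/cong_reading_Rl_ord.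
Qed.
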